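(* Let $k\ge 2$ be an integer and let $G$ be a graph of order $n$ with $\delta(G)\ge k$. Then $\mathrm{TC}_k(G)\le n-k+1$, with equality if and only if $G\cong K_k\vee G'$ for some graph $G'$ of order $n-k$.
   Context: All graphs are finite, simple and connected. $N(v)$ denotes the open neighborhood of $v$. For a graph $G$ with $\delta(G)\ge k$, a set $S\subseteq V(G)$ is a total $k$-dominating set if $|N(v)\cap S|\ge k$ for every $v\in V(G)$. Two disjoint sets $U,W\subseteq V(G)$ form a total $k$-coalition if neither is a total $k$-dominating set but $U\cup W$ is. A total $k$-coalition partition of $G$ is a partition $\Omega$ of $V(G)$ in which every set forms a total $k$-coalition with some other set of $\Omega$; $\mathrm{TC}_k(G)$ is the maximum cardinality of such a partition. $K_k\vee G'$ denotes the join of the complete graph $K_k$ and $G'$ (disjoint union plus all edges between them). *)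

From mathcomp Require Import all_boot.
Set Implicit Arguments. Unset Strict Implicit. Unset Printing Implicit Defensive.

Definition simple_graph (T : finType) (e : rel T) : Prop :=
  symmetric e /\ irreflexive e.

Definition connected_graph (T : finType) (e : rel T) : Prop :=
  forall x y : T, connect e x y.

Definition nbhd (T : finType) (e : rel T) (v : T) : {set T} := [set u | e v u].

Definition min_degree_ge (T : finType) (e : rel T) (k : nat) : Prop :=
  forall v : T, k <= #|nbhd e v|.

Definition total_k_dom (T : finType) (e : rel T) (k : nat) (S : {set T}) : bool :=
  [forall v : T, k <= #|nbhd e v :&: S|].

Definition total_k_coalition (T : finType) (e : rel T) (k : nat) (U W : {set T}) : bool :=
  [disjoint U & W] && ~~ total_k_dom e k U && ~~ total_k_dom e k W
  && total_k_dom e k (U :|: W).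

Definition total_k_coalition_partition (T : finType) (e : rel T) (k : nat)
    (P : {set {set T}}) : bool :=
  partition P [set: T] &&
  [forall U in P, exists W in P, (W != U) && total_k_coalition e k U W].

Definition TC (T : finType) (e : rel T) (k : nat) : nat :=
  \max_(P : {set {set T}} | total_k_coalition_partition e k P) #|P|.

(* adjacency of the join K_k \/ G' on vertex set 'I_k + V(G') *)
Definition join_Kk_rel (k : nat) (V : finType) (e' : rel V)
    (a b : 'I_k + V) : bool :=
  match a, b with
  | inl i, inl j => i != j
  | inr x, inr y => e' x y
  | _, _ => true
  end.

Definition iso_to_join_Kk (T : finType) (e : rel T) (k m : nat) : Prop :=
  exists e' : rel 'I_m, simple_graph e' /\
    exists f : T -> 'I_k + 'I_m, bijective f /\
      forall x y : T, e x y = join_Kk_rel e' (f x) (f y).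

From mathcomp Require Import all_boot zify.

Set Implicit Arguments. Unset Strict Implicit. Unset Printing Implicit Defensive.

(* A total k-dominating set has more than k vertices, since a vertex of it
   sees at most all the others.  So in a total k-coalition partition a
   coalition pair covers at least k+1 vertices and every other class at least
   one, whence at most n - k + 1 classes.  With n - k + 1 classes the pair
   covers exactly k+1 vertices, which are then pairwise adjacent, and all
   other classes are singletons; as k >= 2 every singleton pairs with the same
   class Y of size k, so Y consists of k universal vertices and G is
   K_k \/ G[V - Y].  Conversely, k universal vertices D give the partition
   into D and singletons, each singleton forming a coalition with D. *)

Definition universal (T : finType) (e : rel T) (v : T) : Prop :=
  forall w, w != v -> e v w.

Definition clique (T : finType) (e : rel T) (S : {set T}) : Prop :=
  {in S &, forall u v, u != v -> e u v}.

Section Partitions.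
Variable T : finType.
Implicit Types (P : {set {set T}}) (A B C D : {set T}).

Lemma card_partition_leqif P D :
  partition P D -> #|P| <= #|D| ?= iff [forall B in P, #|B| == 1].
Proof.
move=> partP; rewrite (card_partition partP) -sum1_card.
apply: leqif_sum => B BP; rewrite eq_sym; apply: leqif_eq.
by rewrite card_gt0 (partition_neq0 partP BP).
Qed.

Lemma card_partition_pair_leqif P A B :
  partition P [set: T] -> A \in P -> B \in P -> A != B ->
  #|P| + #|A :|: B| <= #|T| + 2 ?= iff [forall C in P :\ A :\ B, #|C| == 1].
Proof.
move=> partP AP BP AB.
have BPA : B \in P :\ A by rewrite in_setD1 eq_sym AB.
have partR : partition (P :\ A :\ B) (~: (A :|: B)).
  by rewrite -setTD -setDDl; apply: partitionD1 BPA; apply: partitionD1.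
have cardP : #|P| = #|P :\ A :\ B| + 2.
  by rewrite (cardsD1 A) AP (cardsD1 B (P :\ A)) BPA !add1n addn2.
have cardT : #|T| = #|~: (A :|: B)| + #|A :|: B| by rewrite addnC cardsC.
rewrite cardP cardT -!addnA [2 + _]addnC (mono_leqif (leq_add2r _)).
exact: card_partition_leqif.
Qed.

Lemma partition_set1 A : partition [set [set x] | x in A] A.
Proof.
apply/and3P; split.
- rewrite cover_imset; apply/eqP/setP=> x; apply/bigcupP/idP=> [[y yA]|xA].
    by rewrite inE => /eqP ->.
  by exists x; rewrite ?inE.
- apply/trivIsetP=> _ _ /imsetP[x _ ->] /imsetP[y _ ->] xy.
  by rewrite disjoints1 inE; apply: contra xy => /eqP ->.
- by apply/negP=> /imsetP[x _ /esym/eqP]; rewrite -cards_eq0 cards1.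
Qed.

Lemma partition_setU_set1C D :
  D != set0 -> partition (D |: [set [set x] | x in ~: D]) [set: T].
Proof.
move=> D0; rewrite -(setUCr D); apply: partitionU1 (partition_set1 _) D0 _.
by rewrite disjoints_subset setCK.
Qed.

Lemma card_setU_set1C D : #|D |: [set [set x] | x in ~: D]| = #|~: D|.+1.
Proof.
rewrite cardsU1 (card_imset _ set1_inj).
suff -> : D \notin [set [set x] | x in ~: D] by [].
apply/imsetP=> -[x]; rewrite inE => /negP xD DE.
by apply: xD; rewrite DE set11.
Qed.

End Partitions.

Lemma setC_sum_bij (T : finType) (D : {set T}) m n :
  #|D| = m -> #|~: D| = n ->
  exists g : 'I_m + 'I_n -> T,
    [/\ bijective g, forall i, g (inl i) \in D & forall j, g (inr j) \notin D].
Proof.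
move=> cardD cardDC.
pose g a := match a with
  | inl i => enum_val (cast_ord (esym cardD) i)
  | inr j => enum_val (cast_ord (esym cardDC) j)
  end.
have gD i : g (inl i) \in D by apply: enum_valP.
have gDC j : g (inr j) \notin D by rewrite -in_setC; apply: enum_valP.
exists g; split=> //; apply: inj_card_bij; last first.
  by rewrite card_sum !card_ord -cardD -cardDC cardsC.
case=> [i|j] [i'|j'] /= eq_g.
- by rewrite (cast_ord_inj (enum_val_inj eq_g)).
- by move: (gDC j') (gD i); rewrite /= eq_g => /negPf ->.
- by move: (gDC j) (gD i'); rewrite /= eq_g => /negPf ->.
- by rewrite (cast_ord_inj (enum_val_inj eq_g)).
Qed.

Lemma total_k_coalitionC (T : finType) (e : rel T) k (U W : {set T}) :
  total_k_coalition e k U W = total_k_coalition e k W U.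
Proof.
rewrite /total_k_coalition disjoint_sym setUC -!andbA; congr (_ && _).
exact: andbCA.
Qed.

Section TotalDomination.
Variables (T : finType) (e : rel T) (k : nat).
Hypothesis e_irr : irreflexive e.
Implicit Types (S D : {set T}).

Lemma nbhdI_subset v S : nbhd e v :&: S \subset S :\ v.
Proof.
apply/subsetP=> u; rewrite !inE => /andP[evu ->]; rewrite andbT.
by apply: contraTneq evu => ->; rewrite e_irr.
Qed.

Lemma card_nbhdI_lt v S : v \in S -> #|nbhd e v :&: S| < #|S|.
Proof.
move=> vS; rewrite (cardsD1 v S) vS add1n ltnS.
exact: subset_leq_card (nbhdI_subset v S).
Qed.

(* The point [x] only rules out the empty vertex type, over which [set0] is
   vacuously total k-dominating. *)
Lemma total_k_dom_card (x : T) S : 0 < k -> total_k_dom e k S -> k < #|S|.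
Proof.
move=> k_gt0 /forallP domS.
have /set0Pn[v vS] : S != set0.
  rewrite -card_gt0; apply: leq_trans k_gt0 (leq_trans (domS x) _).
  exact/subset_leq_card/subsetIr.
exact: leq_ltn_trans (domS v) (card_nbhdI_lt vS).
Qed.

Lemma total_k_dom_clique S : total_k_dom e k S -> #|S| = k.+1 -> clique e S.
Proof.
move=> /forallP domS cardS u v uS vS uv.
have nbhdE : nbhd e u :&: S = S :\ u.
  apply/eqP; rewrite eqEcard nbhdI_subset /=.
  by have := cardsD1 u S; rewrite uS cardS add1n => -[<-]; apply: domS.
have : v \in S :\ u by rewrite !inE eq_sym uv.
by rewrite -nbhdE !inE => /andP[].
Qed.

Hypothesis e_sym : symmetric e.

Lemma universal_total_k_dom D S :
  {in D, forall d, universal e d} -> k <= #|D| -> D \subset S -> k < #|S| ->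
  total_k_dom e k S.
Proof.
move=> univD cardD DS cardS; apply/forallP=> v.
have [vD|vD] := boolP (v \in D).
  suff -> : nbhd e v :&: S = S :\ v.
    by move: cardS; rewrite (cardsD1 v S) (subsetP DS v vD).
  apply/eqP; rewrite eqEsubset nbhdI_subset /=.
  by apply/subsetP=> w; rewrite !inE => /andP[wv ->]; rewrite univD.
apply: leq_trans cardD (subset_leq_card _).
apply/subsetP=> d dD; rewrite !inE (subsetP DS d dD) andbT e_sym univD //.
by apply: contraNneq vD => ->.
Qed.

Lemma universal_coalition D a :
  {in D, forall d, universal e d} -> #|D| = k -> 0 < k -> a \notin D ->
  total_k_coalition e k D [set a].
Proof.
move=> univD cardD k_gt0 aD.
have domDa : total_k_dom e k (D :|: [set a]).
  apply: (universal_total_k_dom univD); rewrite ?cardD ?subsetUl //.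
  by rewrite setUC cardsU1 aD cardD.
have nondom S : #|S| <= k -> ~~ total_k_dom e k S.
  apply: contraTN => /(total_k_dom_card a k_gt0).
  by rewrite -ltnNge.
rewrite /total_k_coalition disjoint_sym disjoints1 aD domDa.
by rewrite !nondom ?cardD ?cards1.
Qed.

End TotalDomination.

Section CoalitionPartitions.
Variables (T : finType) (e : rel T) (k : nat).
Hypothesis e_irr : irreflexive e.
Hypothesis k_gt0 : 0 < k.
Implicit Types (P : {set {set T}}) (A B C D Y : {set T}).

Lemma coalition_partner P A :
  total_k_coalition_partition e k P -> A \in P ->
  exists2 B, B \in P & (A != B) && total_k_dom e k (A :|: B).
Proof.
case/andP=> _ /forall_inP partnerP /partnerP /exists_inP[B BP /andP[BA coalAB]].
by exists B; rewrite // eq_sym BA; case/andP: coalAB.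
Qed.

Lemma coalition_partition_card P :
  total_k_coalition_partition e k P -> #|P| <= #|T| - k + 1.
Proof.
move=> coalP; have partP : partition P [set: T] by case/andP: coalP.
have [->|/set0Pn[A AP]] := eqVneq P set0; first by rewrite cards0.
have [B BP /andP[AB domAB]] := coalition_partner coalP AP.
have /set0Pn[x _] := partition_neq0 partP AP.
have gt_ABk := total_k_dom_card e_irr x k_gt0 domAB.
have [le_PT _] := card_partition_pair_leqif partP AP BP AB.
lia.
Qed.

Section Tight.
Variable P : {set {set T}}.
Hypothesis coalP : total_k_coalition_partition e k P.
Hypothesis tightP : #|P| = #|T| - k + 1.

Let partP : partition P [set: T]. Proof. by case/andP: coalP. Qed.

Let in_cover x : x \in cover P.
Proof. by rewrite (cover_partition partP) inE. Qed.

Lemma tight_coalition A B :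
  A \in P -> B \in P -> A != B -> total_k_dom e k (A :|: B) ->
  #|A :|: B| = k.+1 /\ {in P :\ A :\ B, forall C, #|C| = 1}.
Proof.
move=> AP BP AB domAB.
have /set0Pn[x _] := partition_neq0 partP AP.
have gt_ABk := total_k_dom_card e_irr x k_gt0 domAB.
have [le_PT eq_PT] := card_partition_pair_leqif partP AP BP AB.
have cardAB : #|A :|: B| = k.+1 by lia.
split=> // C CR; apply/eqP; move: C CR; apply/forall_inP; rewrite -eq_PT.
by apply/eqP; lia.
Qed.

Lemma tight_singleton_partner z Y :
  [set z] \in P -> Y \in P -> Y != [set z] -> 1 < #|Y| ->
  [/\ #|Y| = k, clique e (z |: Y) & {in P :\ [set z] :\ Y, forall C, #|C| = 1}].
Proof.
move=> zP YP Yz cardY.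
have [Y' Y'P /andP[zY' domzY']] := coalition_partner coalP zP.
have [cardzY' singR] := tight_coalition zP Y'P zY' domzY'.
have eqY' : Y' = Y.
  apply: contraTeq cardY => Y'Y; rewrite singR ?ltnn //.
  by rewrite !inE eq_sym Y'Y Yz.
subst Y'; split=> //; last exact: (total_k_dom_clique e_irr domzY' cardzY').
have /trivIsetP/(_ _ _ zP YP zY') := partition_trivIset partP.
by rewrite disjoints1 => zY; move: cardzY'; rewrite cardsU1 zY => -[].
Qed.

Lemma tight_universal c Y :
  [set c] \in P -> Y \in P -> 1 < #|Y| ->
  #|Y| = k /\ {in Y, forall y, universal e y}.
Proof.
move=> cP YP cardY.
have neq_set1 x : Y != [set x] by apply: contraTneq cardY => ->; rewrite cards1.
have [cardYk cliqueY singR] := tight_singleton_partner cP YP (neq_set1 c) cardY.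
split=> // y yY w wy.
have [wY|wY] := boolP (w \in Y).
  by apply: cliqueY; rewrite ?inE ?yY ?wY ?orbT // eq_sym.
have wP : [set w] \in P.
  suff <- : pblock P w = [set w] by apply: pblock_mem (in_cover w).
  apply/esym/eqP; rewrite eqEcard sub1set mem_pblock in_cover /=.
  have [->|wc] := eqVneq (pblock P w) [set c]; first by rewrite !cards1.
  rewrite cards1 singR // !inE wc (pblock_mem (in_cover w)) !andbT.
  by apply: contraNneq wY => <-; rewrite mem_pblock.
have [_ cliquewY _] := tight_singleton_partner wP YP (neq_set1 w) cardY.
by apply: cliquewY; rewrite ?inE ?yY ?eqxx ?orbT // eq_sym.
Qed.

Lemma tight_universal_set :
  1 < k -> exists2 D : {set T}, #|D| = k & {in D, forall d, universal e d}.
Proof.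
move=> k_gt1.
have /set0Pn[A AP] : P != set0 by rewrite -card_gt0 tightP addn1.
have [B BP /andP[AB domAB]] := coalition_partner coalP AP.
have [cardAB singR] := tight_coalition AP BP AB domAB.
have [R0|/set0Pn[C CR]] := eqVneq (P :\ A :\ B) set0.
  have ABT : A :|: B = [set: T].
    apply/setP=> x; rewrite !inE.
    have : pblock P x \notin P :\ A :\ B by rewrite R0 inE.
    rewrite !inE (pblock_mem (in_cover x)) andbT negb_and !negbK.
    by case/orP=> /eqP <-; rewrite mem_pblock in_cover ?orbT.
  have /card_gt0P[x _] : 0 < #|T| by rewrite -cardsT -ABT cardAB.
  exists ([set: T] :\ x).
    by move: cardAB; rewrite ABT (cardsD1 x) inE => -[].
  move=> d _ w wd; apply: (total_k_dom_clique e_irr domAB cardAB).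
  - by rewrite ABT.
  - by rewrite ABT.
  - by rewrite eq_sym.
have /cards1P[c Cc] : #|C| == 1 by rewrite singR.
have cP : [set c] \in P by rewrite -Cc; case/setD1P: CR => _ /setD1P[].
have [Y YP cardY] : exists2 Y, Y \in P & 1 < #|Y|.
  have [le_AB _] := leq_card_setU A B.
  by have [A1|A1] := leqP #|A| 1; [exists B => //; lia | exists A].
by have [cardYk univY] := tight_universal cP YP cardY; exists Y.
Qed.

End Tight.

Lemma TC_le : TC e k <= #|T| - k + 1.
Proof. by apply/bigmax_leqP=> P; apply: coalition_partition_card. Qed.

Lemma TC_tight_universal :
  1 < k -> TC e k = #|T| - k + 1 ->
  exists2 D : {set T}, #|D| = k & {in D, forall d, universal e d}.
Proof.
move=> k_gt1; case: (pickP (total_k_coalition_partition e k)) => [P0 coalP0|none].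
  rewrite /TC (bigmax_eq_arg P0) //; case: arg_maxnP => // P coalP _ tightP.
  exact: tight_universal_set coalP tightP k_gt1.
by rewrite /TC big_pred0 // addn1.
Qed.

Hypothesis e_sym : symmetric e.

Lemma universal_TC_ge D :
  min_degree_ge e k -> #|D| = k -> {in D, forall d, universal e d} ->
  #|T| - k + 1 <= TC e k.
Proof.
move=> degk cardD univD.
have /set0Pn[d dD] : D != set0 by rewrite -card_gt0 cardD.
have cardDC : #|~: D| = #|T| - k by rewrite -(cardsC D) cardD addKn.
have /set0Pn[w wDC] : ~: D != set0.
  rewrite -card_gt0 cardDC subn_gt0.
  apply: leq_ltn_trans (degk d) _.
  by rewrite -cardsT -[nbhd e d]setIT (card_nbhdI_lt e_irr) ?inE.
pose Q := D |: [set [set x] | x in ~: D].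
have coalQ : total_k_coalition_partition e k Q.
  apply/andP; split; first by apply: partition_setU_set1C; apply/set0Pn; exists d.
  apply/forall_inP=> A /setU1P[->|/imsetP[a aDC ->]]; apply/exists_inP.
    exists [set w]; first by rewrite setU1r // imset_f.
    rewrite inE in wDC; rewrite universal_coalition // andbT.
    by apply: contraNneq wDC => <-; apply: set11.
  exists D; first exact: setU11.
  rewrite inE in aDC; rewrite total_k_coalitionC universal_coalition // andbT.
  by apply: contraNneq aDC => ->; apply: set11.
have := @leq_bigmax_cond _ _ (fun P => #|P|) Q coalQ.
by rewrite -/(TC e k) card_setU_set1C cardDC addn1.
Qed.

End CoalitionPartitions.

Section JoinKk.
Variables (T : finType) (e : rel T) (k : nat).

Lemma join_Kk_universal m :
  iso_to_join_Kk e k m ->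
  exists2 D : {set T}, #|D| = k & {in D, forall d, universal e d}.
Proof.
case=> e' [_ [f [[g fK gK] edge_f]]].
exists [set g (inl i) | i : 'I_k].
  by rewrite card_imset ?card_ord // => i j /(can_inj gK) [].
move=> _ /imsetP[i _ ->] w wi; rewrite edge_f gK.
case fw: (f w) => [j|//] /=.
by apply: contra_neq wi => ij; rewrite -[w]fK fw ij.
Qed.

Lemma universal_join_Kk (D : {set T}) :
  simple_graph e -> #|D| = k -> {in D, forall d, universal e d} ->
  iso_to_join_Kk e k (#|T| - k).
Proof.
case=> e_sym e_irr cardD univD.
have cardDC : #|~: D| = #|T| - k by rewrite -(cardsC D) cardD addKn.
have [g [[f gK fK] gD gDC]] := setC_sum_bij cardD cardDC.
pose e' j j' := e (g (inr j)) (g (inr j')).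
exists e'; split.
  by split=> [j j'|j]; [apply: e_sym | apply: e_irr].
exists f; split; first by exists g.
suff edge_g : forall a b, e (g a) (g b) = join_Kk_rel e' a b.
  by move=> x y; rewrite -{1}(fK x) -{1}(fK y) edge_g.
have g_neq a b : a != b -> g b != g a.
  by move=> ab; rewrite (inj_eq (can_inj gK)) eq_sym.
move=> [i|j] [i'|j'] //=.
- have [<-|ii'] := eqVneq i i'; first exact: e_irr.
  by rewrite univD ?gD ?g_neq.
- by rewrite univD ?gD ?g_neq.
- by rewrite e_sym univD ?gD ?g_neq.
Qed.

End JoinKk.

Theorem proposition3p2 (k : nat) (T : finType) (e : rel T)
  (Hsimple : simple_graph e) (Hconn : connected_graph e)
  (Hk : 2 <= k) (Hdeg : min_degree_ge e k) :
  TC e k <= #|T| - k + 1 /\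
  (TC e k = #|T| - k + 1 <-> iso_to_join_Kk e k (#|T| - k)).
Proof.
have [e_sym e_irr] := Hsimple.
have k_gt0 : 0 < k by apply: ltnW.
split; first exact: TC_le.
split=> [/(TC_tight_universal e_irr k_gt0 Hk) [D cardD univD] |
         /join_Kk_universal [D cardD univD]].
  exact: universal_join_Kk Hsimple cardD univD.
apply/eqP; rewrite eqn_leq TC_le //.
by rewrite (universal_TC_ge e_irr k_gt0 e_sym Hdeg cardD univD).
Qed.
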